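(* Let $E$ be a second countable Stone space with at least five points. Then the natural homomorphism $\mathrm{Homeo}(E)\to\mathrm{Aut}(\mathscr{C}(E))$, $f\mapsto \big(U\sqcup V\mapsto f(U)\sqcup f(V)\big)$, is an isomorphism of topological groups, where $\mathrm{Homeo}(E)$ carries the compact–open topology and $\mathrm{Aut}(\mathscr{C}(E))$ carries the permutation topology. (Equivalently, via Stone duality, $\mathrm{Aut}(B)\cong\mathrm{Aut}(\mathscr{C}(E))$ topologically, where $B$ is the countable Boolean algebra of clopen subsets of $E$ and $\mathrm{Aut}(B)$ carries the permutation topology.)
   Context: A Stone space is a compact, Hausdorff, totally disconnected topological space. A cut of $E$ is an unordered partition of $E$ into two disjoint clopen sets $U,V$, written $U\sqcup V$. A cut is non-peripheral if each of $U$ and $V$ contains at least two points. Two cuts $U\sqcup V$ and $U'\sqcup V'$ cross if all four sets $U\cap U'$, $U\cap V'$, $V\cap U'$, $V\cap V'$ are nonempty; otherwise they are compatible. The complex of cuts $\mathscr{C}(E)$ is the simplicial graph whose vertices are the non-peripheral cuts of $E$, with an edge between two distinct cuts whenever they are compatible. The permutation topology on the automorphism group of a graph has as a neighborhood basis of the identity the pointwise stabilizers of finite sets of vertices. *)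

From HB Require Import structures.
From mathcomp Require Import all_boot all_order.
From mathcomp Require Import all_classical all_reals all_analysis.
Set Implicit Arguments. Unset Strict Implicit. Unset Printing Implicit Defensive.
Local Open Scope classical_set_scope.

Section Cuts.
Variable T : topologicalType.

Definition stone_space : Prop :=
  [/\ compact [set: T], hausdorff_space T & totally_disconnected [set: T]].

Definition homeo (f : T -> T) : Prop :=
  exists g : T -> T, [/\ cancel f g, cancel g f, continuous f & continuous g].

(** A cut: an unordered partition {U, V} of T into two disjoint clopen sets;
    it is represented by the set of sets [set U; V]. *)
Definition is_cut_of (C : set (set T)) (U V : set T) : Prop :=
  [/\ C = [set U] `|` [set V], clopen U, clopen V,
      U `&` V = set0 & U `|` V = [set: T]].

Definition has_two_points (A : set T) : Prop :=
  exists x y, [/\ x <> y, A x & A y].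

Definition is_ncut (C : set (set T)) : Prop :=
  exists U V, is_cut_of C U V /\ has_two_points U /\ has_two_points V.

(** Vertices of the complex of cuts. *)
Definition ncut := {C : set (set T) | is_ncut C}.

Definition cross (C D : set (set T)) : Prop :=
  forall A B, C A -> D B -> A `&` B !=set0.

Definition compatible (C D : set (set T)) : Prop := ~ cross C D.

(** Edges of the complex of cuts C(E). *)
Definition adj (a b : ncut) : Prop :=
  a <> b /\ compatible (proj1_sig a) (proj1_sig b).

Definition isAut (phi : ncut -> ncut) : Prop :=
  bijective phi /\ forall a b, adj (phi a) (phi b) <-> adj a b.

Definition cut_image (f : T -> T) (C : set (set T)) : set (set T) :=
  [set f @` A | A in C].

(** The natural map Homeo(E) -> Aut(C(E)).  The fallback branch (identity)
    is only used when f(U) ⊔ f(V) is not a non-peripheral cut, which never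
    happens for homeomorphisms f. *)
Definition Phi (f : T -> T) (a : ncut) : ncut :=
  match pselect (is_ncut (cut_image f (proj1_sig a))) with
  | left H => exist _ (cut_image f (proj1_sig a)) H
  | right _ => a
  end.

Definition co_open (S : set (T -> T)) : Prop :=
  forall f, homeo f -> S f ->
  exists P : set (set T * set T),
    [/\ finite_set P,
        (forall p, P p -> compact p.1 /\ open p.2 /\ f @` p.1 `<=` p.2) &
        (forall h, homeo h -> (forall p, P p -> h @` p.1 `<=` p.2) -> S h)].

(** Permutation topology on Aut(C(E)): S (restricted to automorphisms) is
    open iff for each g in S there is a finite set F of vertices such that
    the coset g ∘ Stab(F) = {h | h = g on F} is contained in S. *)
Definition perm_open (S : set (ncut -> ncut)) : Prop :=
  forall g, isAut g -> S g ->
  exists F : set ncut,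
    finite_set F /\
    (forall h, isAut h -> (forall v, F v -> h v = g v) -> S h).

End Cuts.

(* An automorphism phi of C(E) is read off on non-peripheral clopen sets.  A cut
   adjacent to {U, ~U} has a side strictly inside U or strictly inside ~U, and whether
   two such cuts lie on the same side is expressed by adjacency alone: exactly then some
   cut adjacent to {U, ~U} is adjacent to neither of them.  Hence phi maps {U, ~U} to a
   cut {W, ~W} with matching sides, and U |-> W commutes with complements and is an
   order isomorphism for inclusion.  Such a map preserves meets that are large enough, so by
   compactness each point x determines a unique point f(x) lying in the image of every
   non-peripheral set containing x; f is a homeomorphism inducing phi.  A map fixing
   every cut maps each non-peripheral set to itself or its complement, which forces it
   to be the identity.  Five points ensure there are enough non-peripheral sets
   everywhere.  Finally, the image of a clopen set under a homeomorphism is determined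
   by its action on finitely many cuts, and compact-open neighbourhoods are given by
   finitely many conditions h(C) `<=` W that can be taken with C clopen. *)

From HB Require Import structures.
From mathcomp Require Import all_boot all_order.
From mathcomp Require Import all_classical all_reals all_analysis.
From mathcomp Require Import zify.
Set Implicit Arguments. Unset Strict Implicit. Unset Printing Implicit Defensive.
Local Open Scope classical_set_scope.

Section SetFacts.
Variable T : Type.
Implicit Types A B : set T.

Lemma proper_exP A B : A `<` B <-> A `<=` B /\ exists2 z, B z & ~ A z.
Proof.
split=> [[AB /nonsubset [z [Bz nAz]]]|[AB [z Bz nAz]]]; first by split => //; exists z.
by split => // BA; exact/nAz/BA.
Qed.

Lemma subset_proper_or_eq A B : A `<=` B -> A `<` B \/ A = B.
Proof.
move=> AB; have [->|neq] := pselect (A = B); [right|left] => //.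
by rewrite properEneq; split => //; exact/eqP.
Qed.

End SetFacts.

Section CompactSpace.
Variable T : topologicalType.
Hypothesis cT : compact [set: T].

Lemma compact_directed_meet (K : set T) (D : set (set T)) :
  compact K -> (forall C, D C -> closed C) ->
  (forall A B, D A -> D B -> exists2 C, D C & C `<=` A `&` B) ->
  (forall C, D C -> C `&` K !=set0) -> D !=set0 ->
  exists z, K z /\ forall C, D C -> C z.
Proof.
move=> cK clD dD mD [C0 DC0].
pose F := filter_from D (fun C => C `&` K).
have FF : ProperFilter F.
  apply: filter_from_proper; last by move=> C /mD.
  apply: filter_from_filter; first by exists C0.
  move=> A B DA DB; have [C DC CAB] := dD _ _ DA DB.
  exists C => // z [/CAB [? ?] ?]; split; split => //.
have [z [Kz clz]] := cK F FF (ex_intro2 _ _ C0 DC0 (@subIsetr _ C0 K)).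
exists z; split => // C DC.
have /(closureS (@subIsetl _ C K)) : closure (C `&` K) z.
  by move=> B Bz; apply: clz => //; exists C.
by rewrite -(closure_id C).1 //; apply: clD.
Qed.

Definition quasi_component (x : T) := \bigcap_(C in [set C | clopen C /\ C x]) C.

Lemma closed_quasi_component x : closed (quasi_component x).
Proof. by apply: closed_bigI => C [[]]. Qed.

Lemma quasi_component_clopen_sub (x : T) (W : set T) : open W ->
  quasi_component x `<=` W -> exists C, [/\ clopen C, C x & C `<=` W].
Proof.
move=> oW QW; apply: contrapT => nC.
pose D := [set A | exists C, [/\ clopen C, C x & A = C `&` ~` W]].
have [z [_ zD]] : exists z, [set: T] z /\ forall A, D A -> A z.
  apply: (compact_directed_meet cT).
  - by move=> A [C [[_ cC] _ ->]]; apply: closedI => //; exact: open_closedC.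
  - move=> A B [C1 [cl1 x1 ->]] [C2 [cl2 x2 ->]].
    exists (C1 `&` C2 `&` ~` W); first by exists (C1 `&` C2); split => //; exact: clopenI.
    by move=> z [[? ?] ?].
  - move=> A [C [clC Cx ->]]; apply: contrapT => /set0P/negP; rewrite negbK => /eqP e.
    apply: nC; exists C; split => // z Cz; apply: contrapT => nWz.
    by have : (C `&` ~` W `&` [set: T]) z by []; rewrite e.
  - by exists (setT `&` ~` W); exists setT; split => //; exact: clopenT.
have [_ nWz] := zD (setT `&` ~` W) (ex_intro _ setT (And3 clopenT I erefl)).
by apply/nWz/QW => C [clC Cx]; have [] := zD (C `&` ~` W) (ex_intro _ C (And3 clC Cx erefl)).
Qed.

Hypothesis hT : hausdorff_space T.

(* Normality separates the two closed pieces by disjoint open sets U and W; a clopen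
   neighbourhood C of x inside U `|` W then makes C `&` U a clopen set containing
   the quasi-component, which therefore misses P. *)
Lemma quasi_component_split (x : T) (B P : set T) : closed B -> closed P ->
  B `&` P = set0 -> quasi_component x = B `|` P -> B x -> P = set0.
Proof.
move=> clB clP BP0 QBP Bx.
have snb : set_nbhs B (~` P).
  apply/set_nbhsP; exists (~` P); split => //; first exact: closed_openC.
  by move=> z Bz Pz; have : (B `&` P) z by []; rewrite BP0.
have [V /set_nbhsP [U [oU BU UV]] clVP] := compact_normal hT cT clB snb.
pose W := ~` closure V.
have oW : open W by apply: closed_openC; exact: closed_closure.
have UW0 z : U z -> W z -> False by move=> Uz; apply; apply/subset_closure/UV.
have PW : P `<=` W by move=> z Pz /clVP.
have [C [[oC cC] Cx CUW]] : exists C, [/\ clopen C, C x & C `<=` U `|` W].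
  apply: quasi_component_clopen_sub; first exact: openU.
  by rewrite QBP => z [/BU|/PW]; [left|right].
have clCU : clopen (C `&` U).
  split; first exact: openI.
  have -> : C `&` U = C `&` ~` W.
    apply/seteqP; split => z [Cz Uz]; split => //; first exact: UW0.
    by case: (CUW _ Cz).
  by apply: closedI => //; exact: open_closedC.
apply/seteqP; split => // z Pz.
have [_ Uz] : (C `&` U) z.
  by apply: (_ : quasi_component x z); [rewrite QBP; right|split => //; split => //; exact: BU].
exact: UW0 Uz (PW _ Pz).
Qed.

Lemma connected_quasi_component x : connected (quasi_component x).
Proof.
have Qx : quasi_component x x by move=> C [].
move=> B [b Bb] [Op oOp BQO] [Cl clCl BQCl].
have clB : closed B by rewrite BQCl; apply: closedI => //; exact: closed_quasi_component.
pose P := quasi_component x `&` ~` Op.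
have clP : closed P by apply: closedI; [exact: closed_quasi_component|exact: open_closedC].
have BP0 : B `&` P = set0 by apply/seteqP; split => // z [+ [_ nO]]; rewrite BQO => -[].
have QBP : quasi_component x = B `|` P.
  apply/seteqP; split; last by move=> z [|[]//]; rewrite BQO => -[].
  by move=> z Qz; case: (pselect (Op z)) => Oz; [left; rewrite BQO|right].
case: (pselect (B x)) => Bx.
  by rewrite QBP (quasi_component_split clB clP BP0 QBP Bx) setU0.
have Px : P x by move: Qx; rewrite QBP => -[].
have B0 : B = set0.
  by apply: (quasi_component_split clP clB _ _ Px); [rewrite setIC|rewrite setUC].
by move: Bb; rewrite B0.
Qed.

Lemma totally_disconnected_zero_dimensional :
  totally_disconnected [set: T] -> zero_dimensional T.
Proof.
move=> tdT x y /eqP xy; apply: contrapT => nC; apply: xy.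
have Qy : quasi_component x y.
  move=> C [clC Cx]; apply: contrapT => nCy; exact: nC (ex_intro _ C (And3 clC Cx nCy)).
have : connected_component [set: T] x y.
  exists (quasi_component x) => //; split => //; last exact: connected_quasi_component.
  by move=> C [].
by rewrite tdT.
Qed.

Hypothesis zdT : zero_dimensional T.

Lemma clopen_nbhs_sub (x : T) (W : set T) : open W -> W x ->
  exists C, [/\ clopen C, C x & C `<=` W].
Proof.
move=> oW Wx; have [C [Cx clC] CW] := zero_dimensional_cvg hT zdT cT (open_nbhs_nbhs (conj oW Wx)).
by exists C.
Qed.

Lemma clopen_between (K W : set T) : compact K -> open W -> K `<=` W ->
  exists C, [/\ clopen C, K `<=` C & C `<=` W].
Proof.
move=> cK oW KW; apply: contrapT => nC.
pose D := [set A | exists C, [/\ clopen C, C `<=` W & A = ~` C]].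
have [z [Kz zD]] : exists z, K z /\ forall A, D A -> A z.
  apply: (compact_directed_meet cK).
  - by move=> A [C [[oC _] _ ->]]; exact: open_closedC.
  - move=> A B [C1 [cl1 s1 ->]] [C2 [cl2 s2 ->]].
    exists (~` (C1 `|` C2)); last by move=> z nz; split => h; apply: nz; [left|right].
    by exists (C1 `|` C2); split => //; [exact: clopenU|move=> z [/s1|/s2]].
  - move=> A [C [clC CW ->]]; apply: contrapT => /set0P/negP; rewrite negbK => /eqP e.
    apply: nC; exists C; split => // z Kz; apply: contrapT => nz.
    by have : (~` C `&` K) z by []; rewrite e.
  - by exists (~` set0), set0; split => //; exact: clopen0.
have [C [clC Cz CW]] := clopen_nbhs_sub oW (KW _ Kz).
exact: zD (~` C) (ex_intro _ C (And3 clC CW erefl)) Cz.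
Qed.

Lemma compact_set2 (a b : T) : compact [set a; b].
Proof. by apply: compactU; exact: compact_set1. Qed.

Lemma clopen_separation (K L : set T) : compact K -> compact L -> K `<=` ~` L ->
  exists C, [/\ clopen C, K `<=` C & L `<=` ~` C].
Proof.
move=> cK cL KL; have oL : open (~` L) by exact/closed_openC/(compact_closed hT cL).
have [C [clC KC CL]] := clopen_between cK oL KL.
by exists C; split => // z Lz Cz; exact: CL z Cz Lz.
Qed.

End CompactSpace.


Section FivePoints.
Variables (T : topologicalType) (pts : 'I_5 -> T).
Hypothesis ipts : injective pts.

Definition has_three_points (A : set T) :=
  exists a b c, [/\ a <> b, a <> c, b <> c & [/\ A a, A b & A c]].

Lemma has_three_points_setC (U : set T) : has_three_points U \/ has_three_points (~` U).
Proof.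
have three_in (B : {set 'I_5}) (P : set T) : {in B, forall i, P (pts i)} -> 2 < #|B| ->
    has_three_points P.
  move=> BP /card_gt2P[i [j [k [[Bi Bj Bk] [ij jk ki]]]]].
  exists (pts i), (pts j), (pts k).
  have neq x y : x != y -> pts x <> pts y by move=> /eqP xy /ipts.
  by split; [exact: neq|apply/neq; rewrite eq_sym|exact: neq|split; exact: BP].
pose A := [set i | `[< U (pts i) >]]%SET.
have := cardsC A; rewrite card_ord => cardA.
have [A3|A2] := ltnP 2 #|A|; [left|right].
  by apply: three_in A3 => i; rewrite inE => /asboolP.
apply: (three_in (~: A)); last by move: cardA A2; set m := #|~: A|; lia.
by move=> i; rewrite !inE => /asboolP.
Qed.

Lemma two_points_avoiding (a b c : T) : exists p q,
  [/\ p <> q, p <> a, p <> b, p <> c & [/\ q <> a, q <> b & q <> c]].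
Proof.
pose A := [set i | pts i \notin [:: a; b; c]]%SET.
have cardCA : #|~: A| <= 3.
  rewrite -(size_image pts); apply: (@uniq_leq_size _ _ [:: a; b; c]).
    by rewrite map_inj_uniq ?enum_uniq.
  by move=> y /fintype.imageP[i]; rewrite !inE negbK => iA ->.
have /card_gt1P[i [j [Ai Aj ij]]] : 1 < #|A|.
  by move: (cardsC A); rewrite card_ord; lia.
move: Ai Aj; rewrite !inE !negb_or => /and3P[/eqP ? /eqP ? /eqP ?] /and3P[/eqP ? /eqP ? /eqP ?].
by exists (pts i), (pts j); split => //; move/ipts/eqP; apply/negP.
Qed.

End FivePoints.

Section NonPeripheralClopen.
Variable T : topologicalType.
Implicit Types (A B U V W : set T) (a b c d : ncut T).

(* The library's [clopenC] takes a spurious set argument. *)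
Lemma clopen_setC A : clopen A -> clopen (~` A).
Proof. exact: clopenC set0. Qed.

Definition np_clopen A := [/\ clopen A, has_two_points A & has_two_points (~` A)].

Lemma np_clopenC A : np_clopen A -> np_clopen (~` A).
Proof. by case=> ? ? ?; split; rewrite ?setCK //; exact: clopen_setC. Qed.

Lemma np_clopen_neq0 A : np_clopen A -> A !=set0.
Proof. by case=> _ [x [_ [_ ? _]]] _; exists x. Qed.

Lemma has_two_points_sub A B : A `<=` B -> has_two_points A -> has_two_points B.
Proof. by move=> AB [x [y [xy Ax Ay]]]; exists x, y; split => //; apply: AB. Qed.

Definition cut_of A : set (set T) := [set A] `|` [set ~` A].

Lemma cut_ofC A : cut_of (~` A) = cut_of A.
Proof. by rewrite /cut_of setCK setUC. Qed.

Lemma cut_of_eq A W : cut_of A = cut_of W -> W = A \/ W = ~` A.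
Proof. by move=> e; have : cut_of A W by rewrite e; left. Qed.

Lemma ncut_inj a b : proj1_sig a = proj1_sig b -> a = b.
Proof.
case: a b => [a ha] [b hb] /= e; subst b.
by rewrite (Prop_irrelevance ha hb).
Qed.

Lemma np_clopen_ncut U : np_clopen U -> is_ncut (cut_of U).
Proof.
case=> clU h1 h2; exists U, (~` U); split => //; split => //.
- exact: clopen_setC.
- by rewrite setICr.
- by rewrite setUCr.
Qed.

Definition ncut_of U (h : np_clopen U) : ncut T := exist _ (cut_of U) (np_clopen_ncut h).

Lemma ncut_ofC U (h : np_clopen U) (h' : np_clopen (~` U)) : ncut_of h' = ncut_of h.
Proof. by apply: ncut_inj; rewrite /= cut_ofC. Qed.

Lemma ncutP a : exists U, np_clopen U /\ proj1_sig a = cut_of U.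
Proof.
case: a => C [U [V [[eC clU clV UV0 UV] [hU hV]]]] /=; rewrite eC.
suff VU : V = ~` U by exists U; split; [split; rewrite -?VU|rewrite VU].
apply/seteqP; split => z; first by move=> Vz Uz; have : (U `&` V) z by []; rewrite UV0.
by move=> nUz; have [] : (U `|` V) z by rewrite UV.
Qed.

Lemma ncut_ofE a U (h : np_clopen U) : proj1_sig a = cut_of U -> a = ncut_of h.
Proof. by move=> e; apply: ncut_inj. Qed.

Lemma np_clopen_of_cut a P : proj1_sig a = cut_of P -> np_clopen P.
Proof.
move=> e; have [V [npV eV]] := ncutP a.
by have [->|->] := cut_of_eq (etrans (esym eV) e); last exact: np_clopenC.
Qed.

Lemma cross_cut_ofP A B : cross (cut_of A) (cut_of B) <->
  [/\ A `&` B !=set0, A `&` ~` B !=set0, ~` A `&` B !=set0 & ~` A `&` ~` B !=set0].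
Proof.
split; first by move=> h; split; apply: h; rewrite /cut_of /=; auto.
by case=> h1 h2 h3 h4 X Y [->|->] [->|->].
Qed.

Lemma not_cross_cut_of A B : ~ cross (cut_of A) (cut_of B) ->
  exists X Y, [/\ X = A \/ X = ~` A, Y = B \/ Y = ~` B & X `&` Y = set0].
Proof.
move=> ncr; apply: contrapT => nex; apply/ncr/cross_cut_ofP.
have meet X Y : X = A \/ X = ~` A -> Y = B \/ Y = ~` B -> X `&` Y !=set0.
  by move=> hX hY; apply/set0P/eqP => XY0; apply: nex; exists X, Y.
by split; apply: meet; auto.
Qed.

Lemma crossC (C D : set (set T)) : cross C D -> cross D C.
Proof. by move=> h X Y DX CY; rewrite setIC; exact: h. Qed.

Lemma adj_sym a b : adj a b -> adj b a.
Proof. by case=> ne ncr; split; [exact/nesym|move/crossC]. Qed.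

Lemma cross_not_adj a b : cross (proj1_sig a) (proj1_sig b) -> ~ adj a b.
Proof. by move=> cr [_]; apply. Qed.

End NonPeripheralClopen.

Section CutsInsideASide.
Variable T : topologicalType.
Hypothesis zdT : zero_dimensional T.
Implicit Types (A B C D P U V W : set T) (a b c d : ncut T).

Definition cut_inside U b := exists2 P, proj1_sig b = cut_of P & P `<` U.

Lemma cut_inside_np_clopen U D (h : np_clopen D) : D `<` U -> cut_inside U (ncut_of h).
Proof. by exists D. Qed.

Lemma adj_cut_inside U (h : np_clopen U) b :
  adj (ncut_of h) b -> cut_inside U b \/ cut_inside (~` U) b.
Proof.
case=> neq; have [V [_ eV]] := ncutP b.
rewrite /= eV => /not_cross_cut_of [X [Y [hX hY XY0]]].
have ebY : proj1_sig b = cut_of Y by rewrite eV; case: hY => ->; rewrite ?cut_ofC.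
have YsX : Y `<=` ~` X by move=> z Yz Xz; have : (X `&` Y) z by []; rewrite XY0.
have YX : Y `<` ~` X.
  split => // XsY; apply/neq/ncut_inj; rewrite /= ebY.
  rewrite (_ : Y = ~` X); last exact/seteqP.
  by rewrite cut_ofC; case: hX => ->; rewrite ?cut_ofC.
by case: hX => eX; rewrite eX in YX; [right|left; rewrite -[U]setCK]; exists Y.
Qed.

Lemma cut_inside_adj U (h : np_clopen U) b : cut_inside U b -> adj (ncut_of h) b.
Proof.
move=> [P eb /proper_exP[PU [z Uz nPz]]]; have [x Px] := np_clopen_neq0 (np_clopen_of_cut eb).
split.
  move=> /(congr1 (@proj1_sig _ _)) /=; rewrite eb => /cut_of_eq [PeU|PeU].
    by apply: nPz; rewrite PeU.
  by have := PU _ Px; move: Px; rewrite PeU.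
by rewrite /= eb => /cross_cut_ofP [_ _ [y [nUy Py]] _]; exact: nUy (PU _ Py).
Qed.

Lemma cut_inside_excl U b : cut_inside U b -> cut_inside (~` U) b -> False.
Proof.
move=> [P eP /proper_exP[PU [z Uz nPz]]] [Q eQ [QU _]].
have [e|e] := cut_of_eq (etrans (esym eP) eQ).
  have [x Px] := np_clopen_neq0 (np_clopen_of_cut eP).
  by apply: (QU x) (PU x Px); rewrite e.
by apply: nPz; apply: contrapT => nPz; apply: (QU z) Uz; rewrite e.
Qed.

Lemma cut_inside_opp_adj U b c : cut_inside U b -> cut_inside (~` U) c -> adj b c.
Proof.
move=> hb hc; split; first by move=> e; subst c; exact: cut_inside_excl hb hc.
case: hb hc => [P eP [PU _]] [Q eQ [QU _]].
by rewrite eP eQ => /cross_cut_ofP [[x [Px Qx]] _ _ _]; exact: QU x Qx (PU x Px).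
Qed.

Lemma np_clopen_split B : np_clopen B ->
  exists S, [/\ clopen S, B `&` S !=set0 & B `&` ~` S !=set0].
Proof.
case=> _ [b [b' [bb' Bb Bb']]] _; have [S [clS Sb nSb']] := zdT (introN eqP bb').
by exists S; split => //; [exists b|exists b'].
Qed.

Lemma exists_np_clopen_proper U : np_clopen U -> has_three_points U ->
  exists B, np_clopen B /\ B `<` U.
Proof.
move=> [clU _ tCU] [a [b [c [ab ac bc [Ua Ub Uc]]]]].
have [S1 [clS1 S1a nS1c]] := zdT (introN eqP ac).
have [S2 [clS2 S2b nS2c]] := zdT (introN eqP bc).
exists (U `&` (S1 `|` S2)); split.
  split.
  - by apply: clopenI => //; exact: clopenU.
  - by exists a, b; split => //; split => //; [left|right].
  - by apply: has_two_points_sub tCU => z nUz [].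
by apply/proper_exP; split=> [z []//|]; exists c => // -[_ []].
Qed.

Section CrossingCut.
Variables (U B C : set T).
Hypotheses (npU : np_clopen U) (npB : np_clopen B) (npC : np_clopen C).
Hypotheses (BU : B `<` U) (CU : C `<` U).

Lemma cross_nested : B `<=` C ->
  exists D, [/\ np_clopen D, D `<` U, cross (cut_of D) (cut_of B) & cross (cut_of D) (cut_of C)].
Proof.
move=> BC; move: BU CU => /proper_exP[BsU _] /proper_exP[CsU [u Uu nCu]].
have [S [clS [b1 [Bb1 Sb1]] [b2 [Bb2 nSb2]]]] := np_clopen_split npB.
have [w nUw] := np_clopen_neq0 (np_clopenC npU).
case: npB npC npU => clB _ _ [clC _ _] [clU _ [w1 [w2 [w12 nw1 nw2]]]].
pose D := (B `&` S) `|` (U `&` ~` C).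
have nDb2 : ~ D b2 by move=> [[_ ?]|[_ /(_ (BC _ Bb2))]].
have npD : np_clopen D.
  split; first by apply: clopenU; apply: clopenI => //; exact: clopen_setC.
    exists b1, u; split; [|by left|by right].
    by move=> e; apply: nCu; rewrite -e; exact: BC.
  by exists w1, w2; split => // -[[/BsU ? _]|[? _]].
exists D; split => //.
- apply/proper_exP; split; first by move=> z [[/BsU]|[]].
  by exists b2 => //; exact: BsU.
- apply/cross_cut_ofP; split.
  + by exists b1; split => //; left.
  + by exists u; split; [right|move=> /BC].
  + by exists b2.
  + by exists w; split => //; [move=> [[/BsU]|[]]|move=> /BsU].
- apply/cross_cut_ofP; split.
  + by exists b1; split; [left|exact: BC].
  + by exists u; split; [right|].
  + by exists b2; split; last exact: BC.
  + by exists w; split => //; [move=> [[/BsU]|[]]|move=> /CsU].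
Qed.

Lemma cross_disjoint : B `&` C = set0 ->
  exists D, [/\ np_clopen D, D `<` U, cross (cut_of D) (cut_of B) & cross (cut_of D) (cut_of C)].
Proof.
move=> BC0; move: BU CU => /proper_exP[BsU _] /proper_exP[CsU _].
have BC z : B z -> C z -> False by move=> Bz Cz; have : (B `&` C) z by []; rewrite BC0.
have [S [clS [b1 [Bb1 Sb1]] [b2 [Bb2 nSb2]]]] := np_clopen_split npB.
have [R [clR [c1 [Cc1 Rc1]] [c2 [Cc2 nRc2]]]] := np_clopen_split npC.
have [w nUw] := np_clopen_neq0 (np_clopenC npU).
case: npB npC npU => clB _ _ [clC _ _] [clU _ [w1 [w2 [w12 nw1 nw2]]]].
pose D := (B `&` S) `|` (C `&` R).
have nDb2 : ~ D b2 by move=> [[_ ?]|[Cb2 _]]; [|exact: BC Bb2 Cb2].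
have nDc2 : ~ D c2 by move=> [[Bc2 _]|[_ ?]]; [exact: BC Bc2 Cc2|].
have nDw : ~ D w by move=> [[/BsU]|[/CsU]].
have npD : np_clopen D.
  split; first by apply: clopenU; exact: clopenI.
    exists b1, c1; split; [|by left|by right].
    by move=> e; apply: (BC b1) => //; rewrite e.
  by exists w1, w2; split => // -[[/BsU ? _]|[/CsU ? _]].
exists D; split => //.
- by apply/proper_exP; split; [move=> z [[/BsU]|[/CsU]]|exists b2 => //; exact: BsU].
- apply/cross_cut_ofP; split.
  + by exists b1; split => //; left.
  + by exists c1; split; [right|move=> Bc1; exact: BC Bc1 Cc1].
  + by exists b2.
  + by exists w; split => // /BsU.
- apply/cross_cut_ofP; split.
  + by exists c1; split; [right|].
  + by exists b1; split; [left|move=> Cb1; exact: BC Bb1 Cb1].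
  + by exists c2.
  + by exists w; split => // /CsU.
Qed.

End CrossingCut.

(* [same_side a b c]: [b] and [c] lie on the same side of [a]; being phrased
   through adjacency alone, this is preserved by automorphisms of C(E). *)
Definition same_side a b c := exists d, [/\ adj a d, ~ adj b d & ~ adj d c].

Lemma same_side_sym a b c : same_side a b c -> same_side a c b.
Proof. by case=> d [h1 h2 h3]; exists d; split => // /adj_sym. Qed.

(* Two cuts inside U either cross, or a cut inside U crossing both exists. *)
Lemma same_side_inside U (h : np_clopen U) b c :
  cut_inside U b -> cut_inside U c -> same_side (ncut_of h) b c.
Proof.
move=> hb hc; case: (hb) (hc) => [B eB sB] [C eC sC].
have npB := np_clopen_of_cut eB; have npC := np_clopen_of_cut eC.
have [cr|ncr] := pselect (cross (proj1_sig b) (proj1_sig c)).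
  by exists b; split; [exact: cut_inside_adj|case|exact: cross_not_adj].
have [D [npD sD cDB cDC]] : exists D, [/\ np_clopen D, D `<` U,
    cross (cut_of D) (cut_of B) & cross (cut_of D) (cut_of C)].
  move: ncr; rewrite eB eC => /not_cross_cut_of [X [Y [hX hY XY0]]].
  have XY z : X z -> Y z -> False by move=> Xz Yz; have : (X `&` Y) z by []; rewrite XY0.
  case: hX => eX; case: hY => eY; subst X Y.
  - exact: cross_disjoint.
  - by apply: cross_nested => // z Bz; apply: contrapT => nCz; exact: XY Bz nCz.
  - have [D [npD sD c1 c2]] : exists D, [/\ np_clopen D, D `<` U,
        cross (cut_of D) (cut_of C) & cross (cut_of D) (cut_of B)].
      by apply: cross_nested => // z Cz; apply: contrapT => nBz; exact: XY nBz Cz.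
    by exists D.
  - exfalso; case: sB sC => BU _ [CU _]; have [w nUw] := np_clopen_neq0 (np_clopenC h).
    by apply: (XY w) => [/BU|/CU].
exists (ncut_of npD); split; first exact/cut_inside_adj/cut_inside_np_clopen.
- by apply: cross_not_adj; rewrite eB /=; exact: crossC.
- by apply: cross_not_adj; rewrite eC /=.
Qed.

Lemma not_same_side_opp U (h : np_clopen U) b c :
  cut_inside U b -> cut_inside (~` U) c -> ~ same_side (ncut_of h) b c.
Proof.
move=> hb hc [d [ad h1 h2]].
case: (adj_cut_inside ad) => hd; first by apply: h2; exact: cut_inside_opp_adj hd hc.
by apply: h1; exact: cut_inside_opp_adj hb hd.
Qed.

End CutsInsideASide.

Section AutomorphismSides.
Variable T : topologicalType.
Hypothesis zdT : zero_dimensional T.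
Variable pts : 'I_5 -> T.
Hypothesis ipts : injective pts.
Variable phi : ncut T -> ncut T.
Hypothesis aut_phi : isAut phi.
Implicit Types (B U V W : set T) (a b c : ncut T).

Let adj_phi a b : adj (phi a) (phi b) <-> adj a b := aut_phi.2 a b.

Lemma aut_can : exists g, cancel phi g /\ cancel g phi.
Proof. by case: aut_phi => -[g h1 h2] _; exists g. Qed.

Lemma same_side_aut a b c : same_side a b c <-> same_side (phi a) (phi b) (phi c).
Proof.
have [g [_ Kg]] := aut_can; split.
  by case=> d [h1 h2 h3]; exists (phi d); split; [apply/adj_phi|move/adj_phi..].
case=> d [h1 h2 h3]; exists (g d); move: h1 h2 h3; rewrite -{1 2 3}(Kg d).
by move=> /adj_phi h1 h2 h3; split => // /adj_phi.
Qed.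

Definition aut_side U W := forall h : np_clopen U,
  [/\ proj1_sig (phi (ncut_of h)) = cut_of W,
      forall b, cut_inside U b -> cut_inside W (phi b) &
      forall b, cut_inside (~` U) b -> cut_inside (~` W) (phi b)].

Lemma aut_sideC U W : aut_side (~` U) W -> aut_side U (~` W).
Proof.
move=> S h; have [e h1 h2] := S (np_clopenC h).
rewrite (ncut_ofC h (np_clopenC h)) in e; split.
- by rewrite e cut_ofC.
- by move=> b hb; apply: h2; rewrite setCK.
- by move=> b hb; rewrite setCK; exact: h1.
Qed.

(* The side W is pinned down by one cut B0 inside U: phi B0 is inside W, and
   [same_side] tells which of the two sides every other cut goes to. *)
Lemma aut_side_ex_three U : np_clopen U -> has_three_points U ->
  exists W, np_clopen W /\ aut_side U W.
Proof.
move=> npU t3; have [B0 [npB0 sB0]] := exists_np_clopen_proper zdT npU t3.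
have inB0 : cut_inside U (ncut_of npB0) by exists B0.
have [W0 [npW0 eW0]] := ncutP (phi (ncut_of npU)).
have side W (npW : np_clopen W) : phi (ncut_of npU) = ncut_of npW ->
    cut_inside W (phi (ncut_of npB0)) -> np_clopen W /\ aut_side U W.
  move=> eW inW; split => // h; rewrite (_ : h = npU) ?eW; last exact: Prop_irrelevance.
  split => // b hb.
    have Sr : same_side (ncut_of npW) (phi b) (phi (ncut_of npB0)).
      by rewrite -eW -same_side_aut; exact: same_side_inside.
    have adb : adj (ncut_of npW) (phi b) by rewrite -eW; apply/adj_phi/cut_inside_adj.
    case: (adj_cut_inside adb) => // hc.
    by case: (not_same_side_opp inW hc (same_side_sym Sr)).
  have adb : adj (ncut_of npW) (phi b).
    by rewrite -eW -(ncut_ofC npU (np_clopenC npU)); apply/adj_phi/cut_inside_adj.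
  case: (adj_cut_inside adb) => // hc; exfalso.
  have := same_side_inside zdT npW hc inW; rewrite -eW -same_side_aut.
  by move/same_side_sym; exact: not_same_side_opp.
have ad0 : adj (ncut_of npW0) (phi (ncut_of npB0)).
  by rewrite -(ncut_ofE npW0 eW0); apply/adj_phi/cut_inside_adj.
case: (adj_cut_inside ad0) => hin; first by exists W0; apply: side => //; exact: ncut_ofE.
exists (~` W0); apply: (side _ (np_clopenC npW0)) hin.
by rewrite (ncut_ofC npW0); exact: ncut_ofE.
Qed.

Lemma aut_side_ex U : np_clopen U -> exists W, np_clopen W /\ aut_side U W.
Proof.
move=> npU; case: (has_three_points_setC ipts U) => t3; first exact: aut_side_ex_three.
have [W [npW S]] := aut_side_ex_three (np_clopenC npU) t3.
by exists (~` W); split; [exact: np_clopenC|exact: aut_sideC].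
Qed.

Lemma aut_side_uniq U W W' : np_clopen U -> aut_side U W -> aut_side U W' -> W' = W.
Proof.
move=> npU S S'; have [e h1 h2] := S npU; have [e' h1' h2'] := S' npU.
have [//|WW] := cut_of_eq (etrans (esym e) e'); subst W'; rewrite setCK in h2'.
exfalso; case: (has_three_points_setC ipts U) => t3.
  have [B0 [npB0 sB0]] := exists_np_clopen_proper zdT npU t3.
  have ib : cut_inside U (ncut_of npB0) by exists B0.
  exact: cut_inside_excl (h1 _ ib) (h1' _ ib).
have [B0 [npB0 sB0]] := exists_np_clopen_proper zdT (np_clopenC npU) t3.
have ib : cut_inside (~` U) (ncut_of npB0) by exists B0.
exact: cut_inside_excl (h2' _ ib) (h2 _ ib).
Qed.

Lemma side_map_ex U : exists W, np_clopen U -> np_clopen W /\ aut_side U W.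
Proof.
case: (pselect (np_clopen U)) => npU; last by exists U.
by have [W h] := aut_side_ex npU; exists W.
Qed.

Definition side_map U : set T := proj1_sig (cid (side_map_ex U)).

Lemma side_mapP U : np_clopen U -> np_clopen (side_map U) /\ aut_side U (side_map U).
Proof. by rewrite /side_map; case: cid => W h /h. Qed.

Lemma np_clopen_side_map U : np_clopen U -> np_clopen (side_map U).
Proof. by move/side_mapP => []. Qed.

Lemma side_map_cut U (h : np_clopen U) : proj1_sig (phi (ncut_of h)) = cut_of (side_map U).
Proof. by have [_ S] := side_mapP h; case: (S h). Qed.

Lemma side_mapC U : np_clopen U -> side_map (~` U) = ~` side_map U.
Proof.
move=> npU; have [_ S] := side_mapP npU; have [_ S'] := side_mapP (np_clopenC npU).
apply: aut_side_uniq (np_clopenC npU) _ S'.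
by apply: aut_sideC; rewrite setCK.
Qed.

Lemma side_map_sub B U : np_clopen B -> np_clopen U -> B `<=` U -> side_map B `<=` side_map U.
Proof.
move=> npB npU BU; case: (subset_proper_or_eq BU) => [sBU|->//].
have [_ S] := side_mapP npU; have [_ h1 _] := S npU.
have [P eP /proper_exP[PU _]] := h1 _ (cut_inside_np_clopen npB sBU).
have [<-//|eP'] := cut_of_eq (etrans (esym (side_map_cut npB)) eP); subst P.
have [_ S'] := side_mapP (np_clopenC npB); have [_ h1' _] := S' (np_clopenC npB).
have sCU : ~` U `<` ~` B.
  move/proper_exP: sBU => [_ [z Uz nBz]].
  by apply/proper_exP; split; [exact/subsetCP|exists z].
have [Q eQ /proper_exP[QU [z Qz nQz]]] := h1' _ (cut_inside_np_clopen (np_clopenC npU) sCU).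
rewrite (side_mapC npB) in QU Qz.
have : cut_of (side_map U) = cut_of Q.
  by rewrite -(side_map_cut npU) -eQ (ncut_ofC npU (np_clopenC npU)).
move=> /cut_of_eq [eQU|eQU]; subst Q; first by case: nQz; exact: PU.
by move=> x px; apply: contrapT => npx; exact: QU x npx px.
Qed.

Lemma side_map_inj B U : np_clopen B -> np_clopen U -> side_map B = side_map U -> B = U.
Proof.
move=> npB npU e; have [g [gK _]] := aut_can.
have : phi (ncut_of npB) = phi (ncut_of npU) by apply: ncut_inj; rewrite !side_map_cut e.
move=> /(can_inj gK) /(congr1 (@proj1_sig _ _)) /= /cut_of_eq [//|eU]; exfalso.
have := side_mapC npB; rewrite -eU -e => ee.
have [x px] := np_clopen_neq0 (np_clopen_side_map npB).
by have := px; rewrite {1}ee => /(_ px).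
Qed.

Lemma side_map_subP B U : np_clopen B -> np_clopen U ->
  (B `<=` U <-> side_map B `<=` side_map U).
Proof.
move=> npB npU; split; first exact: side_map_sub.
move=> sBU; case: (subset_proper_or_eq sBU) => [ss|e]; last by rewrite (side_map_inj npB npU e).
have npsU := np_clopen_side_map npU; have npsB := np_clopen_side_map npB.
have ad' : adj (ncut_of npU) (ncut_of npB).
  apply/adj_phi; rewrite (ncut_ofE npsU (side_map_cut npU)).
  by apply: cut_inside_adj; exists (side_map B) => //; exact: side_map_cut.
case: (adj_cut_inside ad') => -[P /= /cut_of_eq [eP|eP] /proper_exP[PU _]]; subst P => //.
- exfalso; have := side_map_sub (np_clopenC npB) npU PU; rewrite (side_mapC npB) => sCU.
  case: npsU => _ _ [w [_ [_ nw _]]]; apply: nw.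
  by case: (pselect (side_map B w)) => pw; [exact: sBU|exact: sCU].
- exfalso; have := side_map_sub npB (np_clopenC npU) PU; rewrite (side_mapC npU) => sBC.
  by have [x px] := np_clopen_neq0 npsB; exact: sBC x px (sBU x px).
- have UB : U `<=` B by apply/subsetCP.
  move/proper_exP: ss => [_ [z pUz npBz]].
  by case: npBz; exact: side_map_sub UB z pUz.
Qed.

Lemma side_map_surj W : np_clopen W -> exists U, np_clopen U /\ side_map U = W.
Proof.
move=> npW; have [g [gK Kg]] := aut_can.
have [U [npU eU]] := ncutP (g (ncut_of npW)).
have : cut_of (side_map U) = cut_of W by rewrite -(side_map_cut npU) -(ncut_ofE npU eU) Kg.
move=> /cut_of_eq [->|e]; first by exists U.
by exists (~` U); split; [exact: np_clopenC|rewrite side_mapC // -e setCK].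
Qed.

End AutomorphismSides.

Section NonPeripheralNeighbourhoods.
Variable T : topologicalType.
Hypotheses (cT : compact [set: T]) (hT : hausdorff_space T) (zdT : zero_dimensional T).
Variable pts : 'I_5 -> T.
Hypothesis ipts : injective pts.

Lemma np_clopen_set3 (a b c : T) : clopen [set a; b; c] -> a <> b ->
  np_clopen [set a; b; c].
Proof.
move=> cl ab; split => //; first by exists a, b; split => //; left; [left|right].
have [p [q [pq pa pb pc [qa qb qc]]]] := two_points_avoiding ipts a b c.
by exists p, q; split => // -[[]|].
Qed.

Lemma np_clopen_separating (x y : T) : x <> y -> exists B, [/\ np_clopen B, B x & ~ B y].
Proof.
move=> xy; have [p [q [pq px py _ [qx qy _]]]] := two_points_avoiding ipts x y y.
have sep : [set x; p] `<=` ~` [set y; q].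
  by move=> z [->|->] [e|e]; [exact: xy|exact/qx/esym|exact: py|exact: pq].
have [C [clC xpC yqC]] := clopen_separation cT hT zdT (@compact_set2 _ _ _) (@compact_set2 _ _ _) sep.
exists C; split.
- split => //.
  + by exists x, p; split; [exact/nesym|apply: xpC; left|apply: xpC; right].
  + by exists y, q; split; [exact/nesym|apply: yqC; left|apply: yqC; right].
- by apply: xpC; left.
- by apply: yqC; left.
Qed.

(* A clopen neighbourhood D of z missing three other points p, q, r is the
   intersection of the non-peripheral sets D `|` H1 and D `|` (H2 `\` H1), with
   H1 containing p only and H2 containing q only among p, q, r. *)
Lemma np_clopen_nbhs (z : T) (W : set T) : open W -> W z ->
  exists N1 N2, [/\ np_clopen N1, np_clopen N2, N1 z, N2 z & N1 `&` N2 `<=` W].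
Proof.
move=> oW Wz.
have [p [q [pq pz _ _ [qz _ _]]]] := two_points_avoiding ipts z z z.
have [r [_ [_ rz rp rq _]]] := two_points_avoiding ipts z p q.
have oW' : open (W `&` ~` [set p; q; r]).
  apply: openI => //; apply/closed_openC/(compact_closed hT).
  by apply: compactU; [exact: compact_set2|exact: compact_set1].
have npqr : ~ [set p; q; r] z by move=> [[|]|]; apply/nesym.
have [D [clD Dz DW]] := clopen_nbhs_sub cT hT zdT oW' (conj Wz npqr).
have [nDp nDq nDr] : [/\ ~ D p, ~ D q & ~ D r].
  by split => /DW [_]; apply; [left; left|left; right|right].
have [H1 [clH1 pH1 qrH1]] : exists H, [/\ clopen H, H p & ~ H q /\ ~ H r].
  have sep : [set p] `<=` ~` [set q; r] by move=> _ -> [e|e]; [exact: pq|exact: rp].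
  have [H [clH pH qrH]] := clopen_separation cT hT zdT (@compact_set1 _ _) (@compact_set2 _ _ _) sep.
  by exists H; split => //; [exact: pH|split; apply: qrH; [left|right]].
have [H2 [clH2 qH2 rH2]] : exists H, [/\ clopen H, H q & ~ H r].
  have [H [clH qH rH]] := zdT (introN eqP (nesym rq)).
  by exists H.
case: qrH1 => nH1q nH1r.
exists (D `|` H1), (D `|` (H2 `&` ~` H1)); split; first 1 last.
- split; first by apply: clopenU => //; apply: clopenI => //; exact: clopen_setC.
    by exists z, q; split; [exact/nesym|left|right].
  by exists p, r; split; [exact/nesym/rp|move=> [|[_]]|move=> [|[]]].
- by left.
- by left.
- by move=> y [[/DW[]//|H1y] [/DW[]//|[_ nH1y]]].
- split; first exact: clopenU.
    by exists z, p; split; [exact/nesym|left|right].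
  by exists q, r; split; [exact/nesym|move=> []|move=> []].
Qed.

End NonPeripheralNeighbourhoods.

Section PointMap.
Variable T : topologicalType.
Hypotheses (cT : compact [set: T]) (hT : hausdorff_space T) (zdT : zero_dimensional T).
Variable pts : 'I_5 -> T.
Hypothesis ipts : injective pts.
Variable psi : set T -> set T.
Hypothesis psi_np : forall U, np_clopen U -> np_clopen (psi U).
Hypothesis psiC : forall U, np_clopen U -> psi (~` U) = ~` psi U.
Hypothesis psi_subP : forall B U, np_clopen B -> np_clopen U ->
  (B `<=` U <-> psi B `<=` psi U).
Hypothesis psi_surj : forall W, np_clopen W -> exists U, np_clopen U /\ psi U = W.
Implicit Types (A B P Q U W : set T).

Lemma psi_inj A B : np_clopen A -> np_clopen B -> psi A = psi B -> A = B.
Proof. by move=> npA npB e; apply/seteqP; split; apply/psi_subP => //; rewrite e. Qed.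

Lemma np_clopenI A B : np_clopen A -> np_clopen B -> has_two_points (A `&` B) ->
  np_clopen (A `&` B).
Proof.
move=> [clA _ tCA] [clB _ _] t; split => //; first exact: clopenI.
by apply: has_two_points_sub tCA => z nAz [].
Qed.

Lemma psi_meet A B : np_clopen A -> np_clopen B ->
  (A `&` B !=set0 <-> psi A `&` psi B !=set0).
Proof.
move=> npA npB; have disj : A `<=` ~` B <-> psi A `<=` ~` psi B.
  by rewrite -psiC //; apply: psi_subP => //; exact: np_clopenC.
split=> -[x [Ax Bx]]; apply: contrapT => ne.
  by have /disj/(_ x Ax) : psi A `<=` ~` psi B by move=> z pA pB; apply: ne; exists z.
by have /disj/(_ x Ax) : A `<=` ~` B by move=> z pA pB; apply: ne; exists z.
Qed.

Lemma psi_setI_of_two A B : np_clopen A -> np_clopen B -> has_two_points (psi A `&` psi B) ->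
  has_two_points (A `&` B) /\ psi (A `&` B) = psi A `&` psi B.
Proof.
move=> npA npB t.
have [Y [npY eY]] := psi_surj (np_clopenI (psi_np npA) (psi_np npB) t).
have YA : Y `<=` A by apply/psi_subP => //; rewrite eY => z [].
have YB : Y `<=` B by apply/psi_subP => //; rewrite eY => z [].
have YAB : Y `<=` A `&` B by move=> z Yz; split; [exact: YA|exact: YB].
have tAB : has_two_points (A `&` B) by case: npY => _ ? _; exact: has_two_points_sub YAB _.
have npAB := np_clopenI npA npB tAB.
split => //; apply/seteqP; split; last by rewrite -eY; exact: (psi_subP npY npAB).1.
by move=> z pz; split; [exact: (psi_subP npAB npA).1 (@subIsetl _ A B) z pz|
  exact: (psi_subP npAB npB).1 (@subIsetr _ A B) z pz].
Qed.

Lemma psi_setI A B : np_clopen A -> np_clopen B -> has_two_points (A `&` B) ->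
  psi (A `&` B) = psi A `&` psi B.
Proof.
move=> npA npB t; have npAB := np_clopenI npA npB t.
suff t' : has_two_points (psi A `&` psi B) by case: (psi_setI_of_two npA npB t').
case: (psi_np npAB) => _ tt _; apply: has_two_points_sub tt => z pz.
by split; [exact: (psi_subP npAB npA).1 (@subIsetl _ A B) z pz|
  exact: (psi_subP npAB npB).1 (@subIsetr _ A B) z pz].
Qed.

Lemma psi_setU A B : np_clopen A -> np_clopen B -> has_two_points (~` A `&` ~` B) ->
  psi (A `|` B) = psi A `|` psi B.
Proof.
move=> npA npB t.
have npAB : np_clopen (A `|` B).
  case: npA npB => clA tA _ [clB _ _]; split; first exact: clopenU.
    by apply: has_two_points_sub tA => z; left.
  by rewrite setCU.
have := psi_setI (np_clopenC npA) (np_clopenC npB) t.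
by rewrite (psiC npA) (psiC npB) -setCU (psiC npAB) -setCU => /setC_inj.
Qed.

Lemma not_two_points_eq A x : A x -> ~ has_two_points A -> forall z, A z -> z = x.
Proof. by move=> Ax nt z Az; apply: contrapT => zx; apply: nt; exists z, x. Qed.

Lemma psi_meet3_of_two A1 A2 A3 x :
  np_clopen A1 -> np_clopen A2 -> np_clopen A3 -> A1 x -> A2 x -> A3 x ->
  has_two_points (A1 `&` A2) -> exists z, [/\ psi A1 z, psi A2 z & psi A3 z].
Proof.
move=> np1 np2 np3 x1 x2 x3 t.
have [|z [z12 z3]] := proj1 (psi_meet (np_clopenI np1 np2 t) np3); first by exists x.
by move: z12; rewrite psi_setI // => -[z1 z2]; exists z.
Qed.

Lemma psi_pair_point A1 A2 x : np_clopen A1 -> np_clopen A2 -> A1 x -> A2 x ->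
  ~ has_two_points (A1 `&` A2) -> exists y, psi A1 `&` psi A2 = [set y].
Proof.
move=> np1 np2 x1 x2 nt; have [|y y12] := proj1 (psi_meet np1 np2); first by exists x.
exists y; apply/seteqP; split=> [z z12|_ ->//]; apply: (not_two_points_eq y12) z12.
by move=> /(psi_setI_of_two np1 np2) [].
Qed.

Lemma psi_sub_setU M P Q : np_clopen M -> np_clopen P -> np_clopen Q ->
  has_two_points (psi M `&` psi P) -> has_two_points (psi M `&` psi Q) ->
  psi M `<=` psi P `|` psi Q -> M `<=` P `|` Q.
Proof.
move=> npM npP npQ tP tQ sM.
have [tMP eMP] := psi_setI_of_two npM npP tP.
have [tMQ eMQ] := psi_setI_of_two npM npQ tQ.
have npMP := np_clopenI npM npP tMP; have npMQ := np_clopenI npM npQ tMQ.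
have tC : has_two_points (~` (M `&` P) `&` ~` (M `&` Q)).
  by case: npM => _ _; apply: has_two_points_sub => z nz; split => -[].
have npMPQ : np_clopen ((M `&` P) `|` (M `&` Q)).
  case: npMP npMQ => clMP tMP' _ [clMQ _ _]; split; first exact: clopenU.
    by apply: has_two_points_sub tMP' => z; left.
  by rewrite setCU.
have <- : (M `&` P) `|` (M `&` Q) = M.
  apply: psi_inj => //; rewrite psi_setU // eMP eMQ -setIUr.
  by apply/seteqP; split=> [z []//|z Mz]; split => //; exact: sM.
by move=> z [[_ Pz]|[_ Qz]]; [left|right].
Qed.

(* The configuration where P, Q, B pairwise meet only at x while psi P, psi Q,
   psi B pairwise meet at three distinct points y1, y2, y3 is impossible: the
   preimage M of {y1, y2, y3} is covered by P and Q, yet meets B in two points. *)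
Lemma psi_pairwise_points_absurd P Q B x y1 y2 y3 :
  np_clopen P -> np_clopen Q -> np_clopen B ->
  (forall z, P z -> B z -> z = x) -> (forall z, Q z -> B z -> z = x) ->
  psi P `&` psi Q = [set y1] -> psi P `&` psi B = [set y2] -> psi Q `&` psi B = [set y3] ->
  y1 <> y2 -> y1 <> y3 -> y2 <> y3 -> False.
Proof.
move=> npP npQ npB PB QB ePQ ePB eQB y12 y13 y23.
have [[P1 Q1] [P2 B2] [Q3 B3]] :
    [/\ (psi P `&` psi Q) y1, (psi P `&` psi B) y2 & (psi Q `&` psi B) y3].
  by rewrite ePQ ePB eQB.
have npM : np_clopen [set y1; y2; y3].
  apply: (np_clopen_set3 ipts _ y12); rewrite -ePQ -ePB -eQB.
  have clpsi A : np_clopen A -> clopen (psi A) by move/psi_np => [].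
  by apply: clopenU; [apply: clopenU|]; apply: clopenI; exact: clpsi.
have [M [npM' eM]] := psi_surj npM.
have [tMB _] : has_two_points (M `&` B) /\ psi (M `&` B) = psi M `&` psi B.
  apply: psi_setI_of_two => //.
  by exists y2, y3; split => //; rewrite eM; split => //; [left; right|right].
have MPQ : M `<=` P `|` Q.
  apply: psi_sub_setU => //; rewrite eM; last by move=> z [[]|] ->; [left|left|right].
    by exists y1, y2; split => //; split => //; left; [left|right].
  by exists y1, y3; split => //; split => //; [left; left|right].
case: tMB => a [b [ab [Ma Ba] [Mb Bb]]]; apply: ab.
have MBx z : M z -> B z -> z = x by move=> /MPQ[Pz|Qz] Bz; [exact: PB|exact: QB].
by rewrite (MBx a) // (MBx b).
Qed.

Lemma psi_meet3 P Q B x : np_clopen P -> np_clopen Q -> np_clopen B ->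
  P x -> Q x -> B x -> exists z, [/\ psi P z, psi Q z & psi B z].
Proof.
move=> npP npQ npB Px Qx Bx; apply: contrapT => ne.
have ne' z : psi P z -> psi Q z -> psi B z -> False by move=> *; apply: ne; exists z.
have nPQ : ~ has_two_points (P `&` Q).
  by move/(psi_meet3_of_two npP npQ npB Px Qx Bx) => -[z [? ? ?]]; exact: (ne' z).
have nPB : ~ has_two_points (P `&` B).
  by move/(psi_meet3_of_two npP npB npQ Px Bx Qx) => -[z [? ? ?]]; exact: (ne' z).
have nQB : ~ has_two_points (Q `&` B).
  by move/(psi_meet3_of_two npQ npB npP Qx Bx Px) => -[z [? ? ?]]; exact: (ne' z).
have [y1 ePQ] := psi_pair_point npP npQ Px Qx nPQ.
have [y2 ePB] := psi_pair_point npP npB Px Bx nPB.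
have [y3 eQB] := psi_pair_point npQ npB Qx Bx nQB.
have [[P1 Q1] [P2 B2] [Q3 B3]] :
    [/\ (psi P `&` psi Q) y1, (psi P `&` psi B) y2 & (psi Q `&` psi B) y3].
  by rewrite ePQ ePB eQB.
apply: (psi_pairwise_points_absurd npP npQ npB _ _ ePQ ePB eQB).
- by move=> z Pz Bz; exact: (@not_two_points_eq (P `&` B) x (conj Px Bx) nPB z (conj Pz Bz)).
- by move=> z Qz Bz; exact: (@not_two_points_eq (Q `&` B) x (conj Qx Bx) nQB z (conj Qz Bz)).
- by move=> e; apply: (ne' y1) => //; rewrite e.
- by move=> e; apply: (ne' y1) => //; rewrite e.
- by move=> e; apply: (ne' y2) => //; rewrite e.
Qed.

Lemma np_clopen_nbhs_ex (x : T) : exists N, np_clopen N /\ N x.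
Proof.
have [p [_ [_ px _ _ _]]] := two_points_avoiding ipts x x x.
by have [N [npN Nx _]] := np_clopen_separating cT hT zdT ipts (nesym px); exists N.
Qed.

(* If x is the meet of two non-peripheral sets P and Q, the image of x is the
   unique point of psi P `&` psi Q; otherwise the psi B with B x form a directed
   family of closed sets, whose common point is the image of x. *)
Lemma point_image_ex x : exists y, forall B, np_clopen B -> (B x <-> psi B y).
Proof.
have conv y : (forall B, np_clopen B -> B x -> psi B y) ->
    forall B, np_clopen B -> (B x <-> psi B y).
  move=> h B npB; split; first exact: h.
  by move=> pBy; apply: contrapT => nBx; have := h _ (np_clopenC npB) nBx; rewrite psiC.
have [[P [Q [npP npQ Px Qx PQ]]]|niso] :=
    pselect (exists P Q, [/\ np_clopen P, np_clopen Q, P x, Q x &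
                           forall z, P z -> Q z -> z = x]).
  have nt : ~ has_two_points (P `&` Q).
    by move=> [a [b [ab [Pa Qa] [Pb Qb]]]]; apply: ab; rewrite (PQ a) // (PQ b).
  have [y ePQ] := psi_pair_point npP npQ Px Qx nt.
  exists y; apply: conv => B npB Bx.
  have [z [pz qz bz]] := psi_meet3 npP npQ npB Px Qx Bx.
  by have : (psi P `&` psi Q) z by []; rewrite ePQ => <-.
have two B1 B2 : np_clopen B1 -> np_clopen B2 -> B1 x -> B2 x -> has_two_points (B1 `&` B2).
  move=> np1 np2 x1 x2; apply: contrapT => nt; apply: niso.
  exists B1, B2; split => // z z1 z2.
  exact: (@not_two_points_eq (B1 `&` B2) x (conj x1 x2) nt z (conj z1 z2)).
have [N [npN Nx]] := np_clopen_nbhs_ex x.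
pose D := [set S | exists B, [/\ np_clopen B, B x & S = psi B]].
have [y [_ yD]] : exists y, [set: T] y /\ forall S, D S -> S y.
  apply: (compact_directed_meet cT).
  - by move=> S [B [npB _ ->]]; case: (psi_np npB) => -[].
  - move=> S1 S2 [B1 [np1 x1 ->]] [B2 [np2 x2 ->]].
    have t := two _ _ np1 np2 x1 x2.
    exists (psi (B1 `&` B2)); first by exists (B1 `&` B2); split => //; exact: np_clopenI.
    by rewrite psi_setI.
  - by move=> S [B [npB _ ->]]; have [z pz] := np_clopen_neq0 (psi_np npB); exists z.
  - by exists (psi N), N.
by exists y; apply: conv => B npB Bx; apply: yD; exists B.
Qed.

Definition point_map x : T := proj1_sig (cid (point_image_ex x)).

Lemma point_mapP x B : np_clopen B -> (B x <-> psi B (point_map x)).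
Proof. by rewrite /point_map; case: cid => y /= h; exact: h. Qed.

Lemma point_map_continuous : continuous point_map.
Proof.
move=> x W; rewrite /= nbhsE => -[W' [oW' W'x] W'W].
have [N1 [N2 [np1 np2 x1 x2 sN]]] := np_clopen_nbhs cT hT zdT ipts oW' W'x.
have [B1 [npB1 e1]] := psi_surj np1; have [B2 [npB2 e2]] := psi_surj np2.
rewrite nbhsE; exists (B1 `&` B2).
  split; first by apply: openI; [case: npB1 => -[]|case: npB2 => -[]].
  by split; [apply/(point_mapP _ npB1); rewrite e1|apply/(point_mapP _ npB2); rewrite e2].
move=> z [z1 z2]; apply/W'W/sN; split.
  by rewrite -e1; apply/(point_mapP _ npB1).
by rewrite -e2; apply/(point_mapP _ npB2).
Qed.

End PointMap.

Section InverseSideMap.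
Variable T : topologicalType.
Variable psi : set T -> set T.
Hypothesis psi_np : forall U, np_clopen U -> np_clopen (psi U).
Hypothesis psiC : forall U, np_clopen U -> psi (~` U) = ~` psi U.
Hypothesis psi_subP : forall B U, np_clopen B -> np_clopen U ->
  (B `<=` U <-> psi B `<=` psi U).
Hypothesis psi_surj : forall W, np_clopen W -> exists U, np_clopen U /\ psi U = W.
Implicit Types (B U W : set T).

Lemma inv_side_map_ex W : exists U, np_clopen W -> np_clopen U /\ psi U = W.
Proof.
case: (pselect (np_clopen W)) => npW; last by exists W.
by have [U h] := psi_surj npW; exists U.
Qed.

Definition inv_side_map W : set T := proj1_sig (cid (inv_side_map_ex W)).

Lemma inv_side_mapP W : np_clopen W -> np_clopen (inv_side_map W) /\ psi (inv_side_map W) = W.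
Proof. by rewrite /inv_side_map; case: cid => U h /h. Qed.

Lemma inv_side_mapK U : np_clopen U -> inv_side_map (psi U) = U.
Proof.
move=> npU; have [npV e] := inv_side_mapP (psi_np npU).
by apply: (psi_inj psi_subP) => //.
Qed.

Lemma np_clopen_inv_side_map W : np_clopen W -> np_clopen (inv_side_map W).
Proof. by move/inv_side_mapP => []. Qed.

Lemma inv_side_mapC W : np_clopen W -> inv_side_map (~` W) = ~` inv_side_map W.
Proof.
move=> npW; have [npV e] := inv_side_mapP npW; have [npV' e'] := inv_side_mapP (np_clopenC npW).
by apply: (psi_inj psi_subP) => //; [exact: np_clopenC|rewrite e' psiC // e].
Qed.

Lemma inv_side_map_subP B U : np_clopen B -> np_clopen U ->
  (B `<=` U <-> inv_side_map B `<=` inv_side_map U).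
Proof.
move=> npB npU; have [npb eb] := inv_side_mapP npB; have [npu eu] := inv_side_mapP npU.
by rewrite (psi_subP npb npu) eb eu.
Qed.

Lemma inv_side_map_surj W : np_clopen W -> exists U, np_clopen U /\ inv_side_map U = W.
Proof. by move=> npW; exists (psi W); split; [exact: psi_np|exact: inv_side_mapK]. Qed.

End InverseSideMap.

Section Homeomorphisms.
Variable T : topologicalType.
Implicit Types (f g : T -> T) (A B U V : set T) (a b : ncut T).

Lemma image_can2 f g A : cancel f g -> cancel g f -> f @` A = g @^-1` A.
Proof.
move=> fK gK; apply/seteqP; split; first by move=> _ [x Ax <-]; rewrite /preimage /= fK.
by move=> y Agy; exists (g y).
Qed.

Lemma image_can2C f g A : cancel f g -> cancel g f -> f @` (~` A) = ~` (f @` A).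
Proof. by move=> fK gK; rewrite !(image_can2 _ fK gK) preimage_setC. Qed.

Lemma image_can2I f g A B : cancel f g -> cancel g f -> f @` (A `&` B) = f @` A `&` f @` B.
Proof. by move=> fK gK; rewrite !(image_can2 _ fK gK) preimage_setI. Qed.

Lemma image_canK f g A : cancel f g -> g @` (f @` A) = A.
Proof. by move=> fK; rewrite image_comp -[RHS]image_id; apply: eq_imagel => x _ /=. Qed.

Lemma homeo_inv f g : homeo f -> cancel f g -> cancel g f -> homeo g.
Proof.
move=> [g' [fK' gK' cf cg']] fK gK.
have -> : g = g' by apply/funext => x; rewrite -[x in LHS]gK' fK.
by exists f.
Qed.

Lemma homeo_comp f g : homeo f -> homeo g -> homeo (f \o g).
Proof.
move=> [f' [fK fK' cf cf']] [g' [gK gK' cg cg']].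
exists (g' \o f'); split => [x /=|x /=|x|x]; first by rewrite fK gK.
- by rewrite gK' fK'.
- by apply: continuous_comp; [exact: cg|exact: cf].
- by apply: continuous_comp; [exact: cf'|exact: cg'].
Qed.

Lemma homeo_open f A : homeo f -> open A -> open (f @` A).
Proof.
move=> [g [fK gK _ cg]] oA; rewrite (image_can2 _ fK gK).
by apply: (@open_comp _ _ g) => // x _; exact: cg.
Qed.

Lemma homeo_clopen f A : homeo f -> clopen A -> clopen (f @` A).
Proof.
move=> hf [oA cA]; split; first exact: homeo_open.
have [g [fK gK _ _]] := hf.
by rewrite -[A]setCK (image_can2C _ fK gK); apply/open_closedC/homeo_open => //; exact: closed_openC.
Qed.

Lemma has_two_points_image f g A : cancel f g -> has_two_points A -> has_two_points (f @` A).
Proof.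
by move=> fK [x [y [xy Ax Ay]]]; exists (f x), (f y); split; [move/(can_inj fK)|exists x|exists y].
Qed.

Lemma homeo_np_clopen f U : homeo f -> np_clopen U -> np_clopen (f @` U).
Proof.
move=> hf [clU tU tC]; have [g [fK gK _ _]] := hf; split; first exact: homeo_clopen.
  exact: has_two_points_image fK tU.
by rewrite -(image_can2C _ fK gK); exact: has_two_points_image fK tC.
Qed.

Lemma cut_image_cut_of f g U : cancel f g -> cancel g f ->
  cut_image f (cut_of U) = cut_of (f @` U).
Proof.
by move=> fK gK; rewrite /cut_image /cut_of image_setU !image_set1 (image_can2C _ fK gK).
Qed.

Lemma homeo_ncut f a : homeo f -> is_ncut (cut_image f (proj1_sig a)).
Proof.
move=> hf; have [g [fK gK _ _]] := hf; have [U [npU ->]] := ncutP a.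
by rewrite (cut_image_cut_of _ fK gK); apply/np_clopen_ncut/homeo_np_clopen.
Qed.

Lemma Phi_val f a : homeo f -> proj1_sig (Phi f a) = cut_image f (proj1_sig a).
Proof. by move=> /homeo_ncut hf; rewrite /Phi; case: pselect. Qed.

Lemma Phi_ncut_of f U (h : np_clopen U) (hf : homeo f) :
  Phi f (ncut_of h) = ncut_of (homeo_np_clopen hf h).
Proof. by have [g [fK gK _ _]] := hf; apply: ncut_inj; rewrite Phi_val //= (cut_image_cut_of _ fK gK). Qed.

Lemma Phi_comp f g : homeo f -> homeo g -> Phi (f \o g) = Phi f \o Phi g.
Proof.
move=> hf hg; apply/funext => a /=; apply: ncut_inj.
rewrite !Phi_val //; last exact: homeo_comp.
by rewrite /cut_image image_comp; apply: eq_imagel => A _ /=; rewrite image_comp.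
Qed.

Lemma Phi_can f g : homeo f -> homeo g -> cancel f g -> cancel (Phi f) (Phi g).
Proof.
move=> hf hg fK a; have [U [npU eU]] := ncutP a.
by rewrite (ncut_ofE npU eU) !Phi_ncut_of; apply: ncut_inj; rewrite /= image_canK.
Qed.

Lemma cross_image f g U V : cancel f g -> cancel g f ->
  cross (cut_of (f @` U)) (cut_of (f @` V)) <-> cross (cut_of U) (cut_of V).
Proof.
move=> fK gK; have meet A B : (f @` A `&` f @` B !=set0) = (A `&` B !=set0).
  rewrite -(image_can2I _ _ fK gK); apply/propext; split=> [[_ [x ABx _]]|[x ABx]].
    by exists x.
  by exists (f x); exists x.
by split=> /cross_cut_ofP cr; apply/cross_cut_ofP; move: cr;
  rewrite -!(image_can2C _ fK gK) !meet.
Qed.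

Lemma Phi_aut f : homeo f -> isAut (Phi f).
Proof.
move=> hf; have [g [fK gK _ _]] := hf; have hg := homeo_inv hf fK gK.
split; first by exists (Phi g); apply: Phi_can.
move=> a b; have [U [npU eU]] := ncutP a; have [V [npV eV]] := ncutP b.
have crE : cross (proj1_sig (Phi f a)) (proj1_sig (Phi f b)) <->
    cross (proj1_sig a) (proj1_sig b).
  by rewrite !Phi_val // eU eV !(cut_image_cut_of _ fK gK); exact: cross_image.
split=> -[ne ncr]; split.
- by move=> e; apply: ne; rewrite e.
- by move/crE.
- by move/(can_inj (Phi_can hf hg fK)).
- by move/crE.
Qed.

End Homeomorphisms.

Section NaturalMapIsomorphism.
Variable T : topologicalType.
Hypotheses (cT : compact [set: T]) (hT : hausdorff_space T) (zdT : zero_dimensional T).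
Variable pts : 'I_5 -> T.
Hypothesis ipts : injective pts.
Implicit Types (f g k : T -> T) (A N U : set T).

Lemma Phi_eq_image f1 f2 N (h : np_clopen N) : homeo f1 -> homeo f2 ->
  Phi f1 (ncut_of h) = Phi f2 (ncut_of h) -> f1 @` N = f2 @` N \/ f1 @` N = ~` (f2 @` N).
Proof.
move=> h1 h2; rewrite !Phi_ncut_of => /(congr1 (@proj1_sig _ _)) /= /cut_of_eq.
by case=> ->; [left|right; rewrite setCK].
Qed.

(* If k x = z <> x, take A1 containing x and p but not z, q, r, and A2 = A1 `|` H
   with H containing q but not z, r: then k A1 = ~A1 and k A2 = ~A2, so A1 `<=` A2
   forces A2 `<=` A1, which q refutes. *)
Lemma fixing_cuts_id k :
  (forall U, np_clopen U -> k @` U = U \/ k @` U = ~` U) -> k = id.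
Proof.
move=> ks; apply/funext => x; apply: contrapT => kx.
set z := k x in kx.
have [p [q [pq px pz _ [qx qz _]]]] := two_points_avoiding ipts x z z.
have [r [rz rx rp rq]] : exists r, [/\ r <> z, r <> x, r <> p & r <> q].
  have [r1 [r2 [r12 r1x r1p r1q [r2x r2p r2q]]]] := two_points_avoiding ipts x p q.
  have [e1|] := pselect (r1 = z); last by exists r1; split.
  by exists r2; split => // e2; apply: r12; rewrite e1 e2.
have [A1 [clA1 A1xp A1zqr]] : exists A, [/\ clopen A, [set x; p] `<=` A & [set z; q; r] `<=` ~` A].
  apply: clopen_separation => //; try by apply: finite_compact; rewrite ?finite_setU.
  by move=> _ [->|->] [[|]|] e; [exact: kx|exact: qx|exact: rx|exact: pz|exact: pq|exact: rp].
have [H [clH Hq Hzr]] : exists H, [/\ clopen H, [set q] `<=` H & [set z; r] `<=` ~` H].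
  apply: clopen_separation => //; try by apply: finite_compact; rewrite ?finite_setU.
  by move=> _ -> [|] e; [exact: qz|exact: rq].
have npA1 : np_clopen A1.
  split => //; first by exists x, p; split; [exact/nesym|apply: A1xp; left|apply: A1xp; right].
  exists z, q; split; first exact/nesym.
    by apply: A1zqr; left; left.
  by apply: A1zqr; left; right.
have npA2 : np_clopen (A1 `|` H).
  split; first exact: clopenU.
    by exists x, q; split; [exact/nesym|left; apply: A1xp; left|right; exact: Hq].
  exists z, r; split; first exact/nesym.
    by move=> [A1z|Hz]; [apply: (A1zqr z) A1z; left; left|apply: (Hzr z) Hz; left].
  by move=> [A1r|Hr]; [apply: (A1zqr r) A1r; right|apply: (Hzr r) Hr; right].
have kA A : np_clopen A -> A x -> ~ A z -> k @` A = ~` A.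
  by move=> npA Ax nAz; case: (ks A npA) => // e; case: nAz; rewrite -e; exists x.
have A1x : A1 x by apply: A1xp; left.
have nA1z : ~ A1 z by apply: A1zqr; left; left.
have nA2z : ~ (A1 `|` H) z by move=> [//|Hz]; apply: (Hzr z) Hz; left.
have := image_subset k (@subsetUl _ A1 H).
rewrite (kA _ npA1 A1x nA1z) (kA _ npA2 (or_introl A1x) nA2z).
move/subsetCP => /(_ q (or_intror (Hq _ erefl))).
by apply: (A1zqr q); left; right.
Qed.

Lemma Phi_inj f g : homeo f -> homeo g -> Phi f = Phi g -> f = g.
Proof.
move=> hf hg e; have [g' [gK gK' _ _]] := hg.
suff /(congr1 (fun k => g \o k)) : g' \o f = id.
  by move=> ek; apply/funext => x; have := congr1 (@^~ x) ek; rewrite /= gK'.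
apply: fixing_cuts_id => U npU; rewrite -image_comp.
case: (Phi_eq_image hf hg (congr1 (@^~ (ncut_of npU)) e)) => ->.
  by left; exact: image_canK.
by right; rewrite (image_can2C _ gK' gK) (image_canK _ gK).
Qed.

(* The side map of [phi] and its inverse both induce point maps, which are
   mutually inverse continuous maps; the first one induces [phi]. *)
Lemma Phi_surj phi : isAut phi -> exists f, homeo f /\ Phi f = phi.
Proof.
move=> aut; pose psi := side_map zdT ipts aut.
have psi_np U : np_clopen U -> np_clopen (psi U) by exact: np_clopen_side_map.
have psiC U : np_clopen U -> psi (~` U) = ~` psi U by exact: side_mapC.
have psi_subP B U : np_clopen B -> np_clopen U -> (B `<=` U <-> psi B `<=` psi U).
  exact: side_map_subP.
have psi_surj W : np_clopen W -> exists U, np_clopen U /\ psi U = W.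
  exact: side_map_surj.
pose f := point_map cT hT zdT ipts psi_np psiC psi_subP psi_surj.
pose g := point_map cT hT zdT ipts (np_clopen_inv_side_map psi_surj)
  (inv_side_mapC psiC psi_subP psi_surj) (inv_side_map_subP psi_subP psi_surj)
  (inv_side_map_surj psi_np psi_subP psi_surj).
have fP x B : np_clopen B -> (B x <-> psi B (f x)) by exact: point_mapP.
have gP y W : np_clopen W -> (W y <-> inv_side_map psi_surj W (g y)) by exact: point_mapP.
have gf : cancel f g.
  move=> x; apply: contrapT => ne.
  have [B [npB Bx nB]] := np_clopen_separating cT hT zdT ipts (nesym ne).
  apply: nB; rewrite -(inv_side_mapK psi_np psi_subP psi_surj npB).
  by apply/(gP _ _ (psi_np _ npB)); exact/(fP x B npB).
have fg : cancel g f.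
  move=> y; apply: contrapT => ne.
  have [B [npB By nB]] := np_clopen_separating cT hT zdT ipts (nesym ne).
  have [npB' eB'] := inv_side_mapP psi_surj npB.
  by apply: nB; rewrite -eB'; apply/(fP _ _ npB'); exact/(gP y B npB).
have hf : homeo f by exists g; split => //; exact: point_map_continuous.
exists f; split => //; apply/funext => a; have [U [npU eU]] := ncutP a.
apply: ncut_inj; rewrite (ncut_ofE npU eU) Phi_ncut_of /= (side_map_cut zdT ipts aut npU).
congr cut_of; apply/seteqP; split; first by move=> _ [x Ux <-]; exact/(fP x U npU).
by move=> y py; exists (g y); [apply/(fP _ _ npU); rewrite fg|exact: fg].
Qed.
End NaturalMapIsomorphism.

Section NaturalMapHomeomorphism.
Variable T : topologicalType.
Hypotheses (cT : compact [set: T]) (hT : hausdorff_space T) (zdT : zero_dimensional T).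
Variable pts : 'I_5 -> T.
Hypothesis ipts : injective pts.
Implicit Types (f g : T -> T) (A D K M N W : set T) (F : set (ncut T)).

Definition Phi_agree F f g := forall a, F a -> Phi f a = Phi g a.

Definition Phi_determines_image A := exists F, finite_set F /\
  forall f g, homeo f -> homeo g -> Phi_agree F f g -> f @` A = g @` A.

Lemma Phi_determines_imageC A : Phi_determines_image A -> Phi_determines_image (~` A).
Proof.
move=> [F [finF PF]]; exists F; split => // f g hf hg ag.
have [f' [fK fK' _ _]] := hf; have [g' [gK gK' _ _]] := hg.
by rewrite (image_can2C _ fK fK') (image_can2C _ gK gK') (PF _ _ hf hg ag).
Qed.

Lemma Phi_determines_imageI A D : Phi_determines_image A -> Phi_determines_image D ->
  Phi_determines_image (A `&` D).
Proof.
move=> [F1 [fin1 P1]] [F2 [fin2 P2]]; exists (F1 `|` F2); split; first by rewrite finite_setU.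
move=> f g hf hg ag; have [f' [fK fK' _ _]] := hf; have [g' [gK gK' _ _]] := hg.
rewrite (image_can2I _ _ fK fK') (image_can2I _ _ gK gK').
by rewrite (P1 _ _ hf hg) ?(P2 _ _ hf hg) // => a Fa; apply: ag; [right|left].
Qed.

Lemma Phi_nested_image f g N M (hN : np_clopen N) (hM : np_clopen M) :
  homeo f -> homeo g -> M `<` N -> Phi_agree [set ncut_of hN; ncut_of hM] f g ->
  f @` N = g @` N.
Proof.
move=> hf hg /proper_exP[MN [z Nz nMz]] ag.
have [g' [gK gK' _ _]] := hg.
have sub A B : g @` A `<=` g @` B -> A `<=` B.
  by move/(image_subset g'); rewrite !(image_canK _ gK).
have fMN : f @` M `<=` f @` N by exact: image_subset.
case: (Phi_eq_image hf hg (ag _ (or_introl erefl))) => // eN; exfalso.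
case: (Phi_eq_image hf hg (ag _ (or_intror erefl))) => eM; rewrite eN eM in fMN.
  rewrite -(image_can2C _ gK gK') in fMN; have [x Mx] := np_clopen_neq0 hM.
  exact: (sub _ _ fMN) x Mx (MN x Mx).
rewrite -!(image_can2C _ gK gK') in fMN.
by apply: nMz; apply: contrapT => nMz; exact: (sub _ _ fMN) z nMz Nz.
Qed.

Lemma Phi_determines_np_clopen N : np_clopen N -> Phi_determines_image N.
Proof.
move=> npN; case: (has_three_points_setC ipts N) => t3.
  have [M [npM sM]] := exists_np_clopen_proper zdT npN t3.
  exists [set ncut_of npN; ncut_of npM]; split; first exact: finite_set2.
  by move=> f g hf hg; exact: Phi_nested_image.
have [M [npM sM]] := exists_np_clopen_proper zdT (np_clopenC npN) t3.
rewrite -[N]setCK; apply: Phi_determines_imageC.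
exists [set ncut_of (np_clopenC npN); ncut_of npM]; split; first exact: finite_set2.
by move=> f g hf hg; exact: Phi_nested_image.
Qed.

(* A clopen set that is not non-peripheral is, up to complement, empty or a point,
   and a point is the meet of two non-peripheral sets. *)
Lemma Phi_determines_clopen D : clopen D -> Phi_determines_image D.
Proof.
have small E : clopen E -> ~ has_two_points E -> Phi_determines_image E.
  move=> [oE _] nt; have [[x Ex]|E0] := pselect (E !=set0).
    have [N1 [N2 [np1 np2 x1 x2 sN]]] := np_clopen_nbhs cT hT zdT ipts oE Ex.
    have -> : E = N1 `&` N2.
      apply/seteqP; split => // z Ez; rewrite (not_two_points_eq Ex nt Ez).
      by split.
    by apply: Phi_determines_imageI; exact: Phi_determines_np_clopen.
  have -> : E = set0 by apply/seteqP; split => // z Ez; apply: E0; exists z.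
  by exists set0; split => // f g _ _ _; rewrite !image_set0.
move=> clD; have [tD|] := pselect (has_two_points D); last exact: small.
have [tC|nC] := pselect (has_two_points (~` D)).
  exact: Phi_determines_np_clopen.
by rewrite -[D]setCK; apply/Phi_determines_imageC/small => //; exact: clopen_setC.
Qed.

(* f0 K `<=` C `<=` W for a clopen C, and f1 K `<=` f1 (f0^-1 C) = C when Phi f1
   agrees with Phi f0 on the cuts determining the image of the clopen f0^-1 C. *)
Lemma Phi_compact_open_nbhs f0 K W : homeo f0 -> compact K -> open W -> f0 @` K `<=` W ->
  exists F, finite_set F /\ forall f, homeo f -> Phi_agree F f f0 -> f @` K `<=` W.
Proof.
move=> hf0 cK oW sKW; have [f0' [f0K f0K' cf0 _]] := hf0.
have cfK : compact (f0 @` K).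
  by apply: continuous_compact => //; apply: continuous_in_subspaceT => x _; exact: cf0.
have [C [clC sKC sCW]] := clopen_between cT hT zdT cfK oW sKW.
have [F [finF PF]] := Phi_determines_clopen (homeo_clopen (homeo_inv hf0 f0K f0K') clC).
exists F; split => // f hf ag _ [x Kx <-]; apply: sCW.
rewrite -[C](image_canK _ f0K') -(PF _ _ hf hf0 ag); exists x => //.
by rewrite -[x](f0K) /=; exists (f0 x); [apply: sKC; exists x|].
Qed.

Lemma Phi_continuous (S : set (ncut T -> ncut T)) : perm_open S -> co_open [set f | S (Phi f)].
Proof.
move=> pS f hf Sf; have [F [finF PF]] := pS _ (Phi_aut hf) Sf.
pose r (a : ncut T) := proj1_sig (cid (ncutP a)).
have rP a : np_clopen (r a) /\ proj1_sig a = cut_of (r a) by rewrite /r; case: cid.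
pose P := (fun a => (r a, f @` r a)) @` F `|` (fun a => (~` r a, f @` ~` r a)) @` F.
exists P; split.
- by rewrite finite_setU; split; exact: finite_image.
- have ok A : clopen A -> compact A /\ open (f @` A) /\ f @` A `<=` f @` A.
    by move=> [oA cA]; split; [exact: (subclosed_compact cA cT)|split => //; exact: homeo_open].
  move=> p [[a Fa <-]|[a Fa <-]] /=; apply: ok; case: (rP a) => -[clr _ _] _ //.
  exact: clopen_setC.
move=> h hh Ph; apply: (PF _ (Phi_aut hh)) => a Fa; have [npa ea] := rP a.
rewrite (ncut_ofE npa ea) !Phi_ncut_of; apply: ncut_inj => /=; congr cut_of.
have [h' [hK hK' _ _]] := hh; have [f' [fK fK' _ _]] := hf.
have s1 : h @` r a `<=` f @` r a by apply: (Ph (r a, f @` r a)); left; exists a.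
have s2 : h @` (~` r a) `<=` f @` (~` r a) by apply: (Ph (~` r a, f @` ~` r a)); right; exists a.
rewrite (image_can2C _ hK hK') (image_can2C _ fK fK') in s2.
by apply/seteqP; split => // y fy; apply: contrapT => ny; exact: s2 y ny fy.
Qed.

Lemma Phi_open (S : set (T -> T)) : co_open S ->
  perm_open [set phi | exists f, homeo f /\ S f /\ Phi f = phi].
Proof.
move=> cS g _ [f0 [hf0 [Sf0 eg]]]; have [P [finP Pc PS]] := cS f0 hf0 Sf0.
have exF p : exists F, P p -> finite_set F /\
    forall f, homeo f -> Phi_agree F f f0 -> f @` p.1 `<=` p.2.
  have [Pp|nPp] := pselect (P p); last by exists set0 => /nPp.
  have [cK [oW sKW]] := Pc p Pp.
  by have [F h] := Phi_compact_open_nbhs hf0 cK oW sKW; exists F.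
pose Fp p := proj1_sig (cid (exF p)).
have FpP p : P p -> finite_set (Fp p) /\
    forall f, homeo f -> Phi_agree (Fp p) f f0 -> f @` p.1 `<=` p.2.
  by rewrite /Fp; case: cid.
exists (\bigcup_(p in P) Fp p); split; first by apply: bigcup_finite => // p /FpP[].
move=> h auth hg; have [f [hf ef]] := Phi_surj cT hT zdT ipts auth.
exists f; split => //; split => //; apply: PS => // p Pp; apply: (proj2 (FpP p Pp)) => //.
by move=> a Fa; rewrite ef eg; apply: hg; exists p.
Qed.

End NaturalMapHomeomorphism.

Theorem mainTheorem1 (T : topologicalType) :
  stone_space T ->
  @second_countable T ->
  (exists x : 'I_5 -> T, injective x) ->
  (
    (forall f : T -> T, homeo f -> forall a : ncut T,
        is_ncut (cut_image f (proj1_sig a))) /\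
    (forall f : T -> T, homeo f -> isAut (Phi f)) /\
    (forall f g : T -> T, homeo f -> homeo g -> Phi (f \o g) = Phi f \o Phi g) /\
    (forall f g : T -> T, homeo f -> homeo g -> Phi f = Phi g -> f = g) /\
    (forall phi : ncut T -> ncut T, isAut phi -> exists f, homeo f /\ Phi f = phi) /\
    (forall S : set (ncut T -> ncut T), perm_open S -> co_open [set f | S (Phi f)]) /\
    (forall S : set (T -> T), co_open S ->
        perm_open [set phi | exists f, homeo f /\ S f /\ Phi f = phi])).
Proof.
move=> [cT hT tdT] _ [pts ipts].
have zdT := totally_disconnected_zero_dimensional cT hT tdT.
split; [|split; [|split; [|split; [|split; [|split]]]]].
- by move=> f hf a; exact: homeo_ncut.
- by move=> f; exact: Phi_aut.
- by move=> f g; exact: Phi_comp.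
- by move=> f g; apply: (Phi_inj cT hT zdT ipts).
- by move=> phi; apply: (Phi_surj cT hT zdT ipts).
- by move=> S; apply: (Phi_continuous cT).
- by move=> S; apply: (Phi_open cT hT zdT ipts).
Qed.
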